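(* Let $\mathcal{K}\subset\mathbb{R}^n$ be a compact convex set and let $\phi:\mathcal{K}\to\mathbb{R}$ be a continuous convex function. Then for every $\varepsilon>0$ there exist a rational number $T>0$ and a function $f_T\in\mathrm{LSE}_T$ with rational parameters such that $$|f_T(\mathbf{x})-\phi(\mathbf{x})|\leqslant\varepsilon\quad\text{for all }\mathbf{x}\in\mathcal{K}.$$ Moreover, $T$ may be chosen of the form $T=1/p$ where $p$ is a positive integer.
   Context: For $T>0$, $\mathrm{LSE}_T$ denotes the class of functions $f_T:\mathbb{R}^n\to\mathbb{R}$ of the form $$f_T(\mathbf{x})=T\log\Big(\sum_{k=1}^K \exp\big(\langle\boldsymbol{\alpha}^{(k)},\mathbf{x}\rangle/T+\beta_k/T\big)\Big)$$ for some positive integer $K$, vectors $\boldsymbol{\alpha}^{(1)},\dots,\boldsymbol{\alpha}^{(K)}\in\mathbb{R}^n$ and real numbers $\beta_1,\dots,\beta_K$. A function $f_T\in\mathrm{LSE}_T$ has rational parameters if $T$ is rational and $f_T$ can be written in this form with all entries of the vectors $\boldsymbol{\alpha}^{(k)}$ and all $\beta_k$ rational. *)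

From HB Require Import structures.
From mathcomp Require Import all_boot all_order all_algebra.
From mathcomp Require Import all_classical all_reals all_analysis.
Set Implicit Arguments. Unset Strict Implicit. Unset Printing Implicit Defensive.
Import Order.TTheory GRing.Theory Num.Theory.
Import numFieldNormedType.Exports.
Local Open Scope ring_scope.
Local Open Scope classical_set_scope.

Definition dotv (R : realType) (n : nat) (a x : 'rV[R]_n) : R :=
  \sum_(i < n) a ord0 i * x ord0 i.

Definition convex_set_Rn (R : realType) (n : nat) (C : set 'rV[R]_n) : Prop :=
  forall x y, C x -> C y -> forall t : R, 0 <= t <= 1 ->
    C (t *: x + (1 - t) *: y).

Definition convex_on (R : realType) (n : nat) (C : set 'rV[R]_n)
  (phi : 'rV[R]_n -> R) : Prop :=
  forall x y, C x -> C y -> forall t : R, 0 <= t <= 1 ->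
    phi (t *: x + (1 - t) *: y) <= t * phi x + (1 - t) * phi y.

Definition LSE (R : realType) (n K : nat) (T : R)
  (alpha : 'I_K -> 'rV[R]_n) (beta : 'I_K -> R) (x : 'rV[R]_n) : R :=
  T * ln (\sum_(k < K) expR (dotv (alpha k) x / T + beta k / T)).

Definition LSE_rat (R : realType) (n K : nat) (T : rat)
  (alpha : 'I_K -> 'rV[rat]_n) (beta : 'I_K -> rat) : 'rV[R]_n -> R :=
  LSE (ratr T) (fun k => map_mx ratr (alpha k)) (fun k => ratr (beta k)).

(* A continuous convex function on a compact convex set is uniformly
   within eps/2 of the maximum of finitely many affine functions.  At each x0,
   projecting (x0, phi x0 - eps) onto the epigraph of phi gives an affine minorant
   of phi nearly touching it at x0; its coefficients can be rounded to rationals,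
   it stays close to phi near x0 by continuity, and compactness keeps finitely many
   of them.  A log-sum-exp at temperature T lies between the maximum of its K affine
   pieces and that maximum plus T ln K, so T = 1/p with p > 2 ln K / eps suffices. *)

From HB Require Import structures.
From mathcomp Require Import all_boot all_order all_algebra.
From mathcomp Require Import all_classical all_reals all_analysis.
From mathcomp Require Import ring lra.
From mathcomp Require finmap.
Set Implicit Arguments. Unset Strict Implicit. Unset Printing Implicit Defensive.
Import Order.TTheory GRing.Theory Num.Theory.
Import numFieldNormedType.Exports.
Local Open Scope ring_scope.
Local Open Scope classical_set_scope.

Section InnerProduct.
Variables (R : realType) (n : nat).
Implicit Types (a x y : 'rV[R]_n).

Lemma dotvC a x : dotv a x = dotv x a.
Proof. by apply: eq_bigr => i _; rewrite mulrC. Qed.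

Lemma dotvDr a x y : dotv a (x + y) = dotv a x + dotv a y.
Proof. by rewrite /dotv -big_split; apply: eq_bigr => i _; rewrite mxE mulrDr. Qed.

Lemma dotvZr a x k : dotv a (k *: x) = k * dotv a x.
Proof. by rewrite /dotv mulr_sumr; apply: eq_bigr => i _; rewrite mxE mulrCA. Qed.

Lemma dotvBr a x y : dotv a (x - y) = dotv a x - dotv a y.
Proof. by rewrite dotvDr -scaleN1r dotvZr mulN1r. Qed.

Lemma dotvZl a x k : dotv (k *: a) x = k * dotv a x.
Proof. by rewrite dotvC dotvZr dotvC. Qed.

Lemma dotvBl a x y : dotv (x - y) a = dotv x a - dotv y a.
Proof. by rewrite dotvC dotvBr !(dotvC a). Qed.

Lemma dotvvBZ x y t :
  dotv (x - t *: y) (x - t *: y) = dotv x x - 2 * t * dotv x y + t ^+ 2 * dotv y y.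
Proof. by rewrite !dotvBr !dotvBl !dotvZr !dotvZl (dotvC y x); ring. Qed.

Lemma dotvv_ge0 x : 0 <= dotv x x.
Proof. by apply: sumr_ge0 => i _; rewrite -expr2 sqr_ge0. Qed.

Lemma dotvv_eq0 x : dotv x x = 0 -> x = 0.
Proof.
move=> xx0; apply/rowP => i; rewrite mxE.
have /eqP := psumr_eq0P (fun j _ => sqr_ge0 (x ord0 j)) xx0 (i := i) isT.
by rewrite mulf_eq0 orbb => /eqP.
Qed.

Lemma cvg_dotv {T : Type} (F : set_system T) {FF : Filter F} (f g : T -> 'rV[R]_n) a x :
  f @ F --> a -> g @ F --> x -> (fun t => dotv (f t) (g t)) @ F --> dotv a x.
Proof.
move=> fa gx; apply: cvg_big => [|i _]; first exact: add_continuous.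
by apply: cvgM; apply: (continuous_cvg _ (@coord_continuous R 1 n ord0 i _)).
Qed.

Lemma dotv_continuous a : continuous (dotv a).
Proof.
by move=> x; apply: (cvg_dotv (F := nbhs x)); [exact: cvg_cst | exact: (@cvg_id _ (nbhs x))].
Qed.

End InnerProduct.

Lemma le0_of_le_quadratic (R : realFieldType) (A Q : R) :
  (forall t, 0 < t <= 1 -> 2 * t * A <= t ^+ 2 * Q) -> A <= 0.
Proof.
move=> small; rewrite leNgt; apply/negP => A0.
have [QA|AQ] := lerP Q A.
  by have := small 1; rewrite ltr01 lexx expr1n; lra.
have Q_gt0 : 0 < Q by apply: lt_trans AQ.
(* t = A / Q violates the inequality: t^2 Q = t A < 2 t A *)
set t := A / Q.
have t0 : 0 < t by rewrite divr_gt0.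
have t1 : t <= 1 by rewrite ler_pdivrMr ?mul1r ?ltW.
have tQ : t * Q = A by rewrite divfK ?gt_eqF.
by have := small t; rewrite t0 t1 expr2 -[t * t * Q]mulrA tQ => /(_ isT); nra.
Qed.

Section AffineMinorant.
Variables (R : realType) (n : nat) (C : set 'rV[R]_n) (phi : 'rV[R]_n -> R).

(* Squared distance from (x0, c) to (y, max (phi y) c), the point of the epigraph
   of phi nearest to (x0, c) among those above y. *)
Definition epi_dist2 (x0 : 'rV[R]_n) (c : R) (y : 'rV[R]_n) : R :=
  dotv (x0 - y) (x0 - y) + Num.max (phi y - c) 0 ^+ 2.

Lemma epi_dist2_continuous x0 c :
  {within C, continuous phi} -> {within C, continuous epi_dist2 x0 c}.
Proof.
move=> phi_cont y; apply: cvgD.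
  have dist_cont : continuous (fun z : 'rV[R]_n => dotv (x0 - z) (x0 - z)).
    move=> z; apply: (cvg_dotv (F := nbhs z));
    exact: cvgB (cvg_cst x0) (@cvg_id _ (nbhs z)).
  exact: (continuous_subspaceT dist_cont).
have max_cont : {for y, continuous ((fun z : subspace C => phi z - c) \max (fun=> 0 : R^o))}.
  apply: continuous_max; last exact: cvg_cst.
  exact: cvgB (phi_cont y) (cvg_cst c).
exact: (cvgM max_cont max_cont).
Qed.

Hypotheses (C_convex : convex_set_Rn C) (phi_convex : convex_on C phi).

(* The variational inequality <(x0, c) - q, z - q> <= 0 of the projection
   q = (py, c + max (phi py - c) 0) of (x0, c) onto the convex epigraph, tested at
   z = (y, phi y). *)
Lemma epi_dist2_argmin_variational x0 c py :
  C py -> (forall y, C y -> epi_dist2 x0 c py <= epi_dist2 x0 c y) ->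
  forall y, C y ->
  dotv (x0 - py) (y - py) <= Num.max (phi py - c) 0 * (phi y - c - Num.max (phi py - c) 0).
Proof.
move=> Cpy pymin y Cy; set h := Num.max (phi py - c) 0.
set w := x0 - py; set e := y - py; set X := phi y - c - h.
rewrite -subr_le0; apply: (@le0_of_le_quadratic _ _ (dotv e e + X ^+ 2)).
move=> t /andP[t0 t1]; have t01 : 0 <= t <= 1 by rewrite ltW.
set yt := t *: y + (1 - t) *: py.
have ytE : x0 - yt = w - t *: e by apply/rowP => i; rewrite !mxE; ring.
have phi_yt : phi yt - c <= h + t * X.
  have h_ge : phi py - c <= h by rewrite le_max lexx.
  have : (1 - t) * (phi py - c) <= (1 - t) * h by rewrite ler_wpM2l // subr_ge0.
  by have := phi_convex Cy Cpy t01; rewrite /X; lra.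
have max_sq : Num.max (phi yt - c) 0 ^+ 2 <= (h + t * X) ^+ 2.
  have [u0|u0] := leP (phi yt - c) 0; first by rewrite expr2 mul0r sqr_ge0.
  by rewrite ler_sqr ?nnegrE; lra.
have := pymin yt (C_convex Cy Cpy t01); rewrite /epi_dist2 ytE dotvvBZ -/w -/h.
by nra.
Qed.

Lemma convex_affine_minorant x0 eps :
  compact C -> {within C, continuous phi} -> C x0 -> 0 < eps ->
  exists a b, (forall y, C y -> dotv a y + b <= phi y) /\ phi x0 - eps < dotv a x0 + b.
Proof.
move=> C_compact phi_cont Cx0 eps0; set c := phi x0 - eps.
have [py /set_mem Cpy pymin] := EVT_min_rV (ex_intro _ x0 Cx0) C_compact
  (@epi_dist2_continuous x0 c phi_cont).
have := epi_dist2_argmin_variational Cpy (fun y Cy => pymin y (mem_set Cy)).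
set w := x0 - py; set h := Num.max (phi py - c) 0 => var.
have h_gt0 : 0 < h.
  rewrite lt_neqAle le_max lexx orbT andbT; apply/eqP => h0.
  have /dotvv_eq0/eqP : dotv w w = 0.
    by apply/le_anti; rewrite dotvv_ge0 andbT; have := var x0 Cx0; rewrite -h0 mul0r.
  rewrite /w subr_eq0 => /eqP py_x0.
  by move: h0; rewrite /h -py_x0 /c max_l; lra.
exists (h^-1 *: w), (c + h - dotv (h^-1 *: w) py); split => [y Cy|]; rewrite !dotvZl.
  have : h^-1 * dotv w (y - py) <= phi y - c - h by rewrite ler_pdivrMl // var.
  by rewrite dotvBr mulrBr; lra.
have : 0 <= h^-1 * dotv w (x0 - py).
  by apply: mulr_ge0; [rewrite invr_ge0 ltW | exact: dotvv_ge0].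
by rewrite dotvBr mulrBr; lra.
Qed.

End AffineMinorant.

Lemma compact_coord_bounded (R : realType) n (C : set 'rV[R]_n) : compact C ->
  exists2 M : R, 0 < M & forall x, C x -> forall i, `|x ord0 i| <= M.
Proof.
move=> /compact_bounded /ex_strict_bound_gt0 [M M0 CM]; exists M => // x Cx i.
apply: le_trans (ltW (CM x Cx)).
rewrite [`|x|]mx_normrE.
exact: (le_bigmax _ (fun ij : 'I_1 * 'I_n => `|x ij.1 ij.2|) (ord0, i)).
Qed.

Lemma ratr_approx (R : realType) (x eta : R) : 0 < eta ->
  exists q : rat, `|x - ratr q| < eta.
Proof.
move=> eta0.
have [z [x_near [q _ qz]]] := dense_rat (ex_intro _ x (ballxx x eta0)) (ball_open x eta).
by exists q; rewrite qz.
Qed.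

Section RationalAffine.
Variables (R : realType) (n : nat).

Definition rat_affine (a : 'rV[rat]_n) (b : rat) (x : 'rV[R]_n) : R :=
  dotv (map_mx ratr a) x + ratr b.

Lemma rat_affine_continuous a b : continuous (rat_affine a b).
Proof.
move=> x; apply: (@cvgD _ _ _ (nbhs x) _ (dotv (map_mx ratr a))).
  exact: dotv_continuous.
exact: cvg_cst.
Qed.

Lemma rat_affine_approx (a : 'rV[R]_n) (b M delta : R) : 0 < M -> 0 < delta ->
  exists (aq : 'rV[rat]_n) (bq : rat), forall y : 'rV[R]_n, (forall i, `|y ord0 i| <= M) ->
    `|dotv a y + b - rat_affine aq bq y| < delta.
Proof.
move=> M0 delta0.
(* coordinate errors below eta cost at most n eta M < delta / 2 on the inner product *)
set eta := delta / (2 * (n%:R + 1) * M).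
have eta0 : 0 < eta by rewrite divr_gt0 // !mulr_gt0 // ltr_wpDl.
have [aq aqP] := choice (fun i : 'I_n => ratr_approx (a ord0 i) eta0).
have [bq bqP] : exists bq : rat, `|b - ratr bq| < delta / 2.
  by apply: ratr_approx; rewrite divr_gt0.
exists (\row_i aq i), bq => y yM.
have dot_err : `|dotv a y - dotv (map_mx ratr (\row_i aq i)) y| <= n%:R * (eta * M).
  have -> : n%:R * (eta * M) = \sum_(i < n) (eta * M).
    by rewrite sumr_const card_ord mulr_natl.
  rewrite /dotv -sumrB.
  apply: (le_trans (ler_norm_sum _ _ _)); apply: ler_sum => i _.
  by rewrite !mxE -mulrBl normrM ler_pM // ltW.
have eta_small : n%:R * (eta * M) < delta / 2.
  have n1_gt0 : 0 < n%:R + 1 :> R by rewrite ltr_wpDl.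
  have -> : n%:R * (eta * M) = delta / 2 * (n%:R / (n%:R + 1)).
    by rewrite /eta; field; rewrite !gt_eqF.
  by rewrite gtr_pMr ?divr_gt0 // ltr_pdivrMr // mul1r ltrDl.
rewrite /rat_affine.
have -> : dotv a y + b - (dotv (map_mx ratr (\row_i aq i)) y + ratr bq) =
  (dotv a y - dotv (map_mx ratr (\row_i aq i)) y) + (b - ratr bq) by ring.
by apply: (le_lt_trans (ler_normD _ _)); have := bqP; lra.
Qed.

End RationalAffine.

Lemma continuous_within_pos_ball (R : realType) (T : pseudoMetricType R) (C : set T)
    (f : T -> R) x0 :
  {within C, continuous f} -> C x0 -> 0 < f x0 ->
  exists2 r : R, 0 < r & forall y, C y -> ball x0 r y -> 0 < f y.
Proof.
move=> f_cont Cx0 fx0_gt0.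
have /cvgrPdist_lt/(_ _ fx0_gt0) f_near := f_cont x0.
have : within C (nbhs x0) (fun y => `|f x0 - f y| < f x0).
  by rewrite (nbhs_subspace_in Cx0).
move=> /nbhs_ballP[r r_gt0 rP]; exists r => // y Cy x0y.
by have := rP y x0y Cy; rewrite ltr_distlC => /andP[+ _]; rewrite subrr.
Qed.

Section ConvexApproximation.
Variables (R : realType) (n : nat) (C : set 'rV[R]_n) (phi : 'rV[R]_n -> R).
Hypotheses (C_compact : compact C) (C_convex : convex_set_Rn C)
  (phi_cont : {within C, continuous phi}) (phi_convex : convex_on C phi).

Lemma rat_affine_minorant x0 delta : C x0 -> 0 < delta ->
  exists aq bq, (forall y, C y -> rat_affine aq bq y <= phi y + delta) /\
    phi x0 - delta < rat_affine aq bq x0.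
Proof.
move=> Cx0 delta0; have delta2 : 0 < delta / 2 by rewrite divr_gt0.
have [a [b [minor near]]] :=
  convex_affine_minorant C_convex phi_convex C_compact phi_cont Cx0 delta2.
have [M M0 CM] := compact_coord_bounded C_compact.
have [aq [bq approx]] := rat_affine_approx a b M0 delta2.
exists aq, bq; split => [y Cy|].
  by have := minor y Cy; move: (approx y (CM y Cy)); rewrite ltr_norml => /andP[]; lra.
move: (approx x0 (CM x0 Cx0)); rewrite ltr_norml => /andP[]; lra.
Qed.

Lemma rat_affine_minorant_near x0 delta : C x0 -> 0 < delta ->
  exists aq bq, exists2 r : R, 0 < r &
    (forall y, C y -> rat_affine aq bq y <= phi y + delta) /\
    (forall y, C y -> ball x0 r y -> phi y - delta < rat_affine aq bq y).
Proof.
move=> Cx0 delta0; have [aq [bq [minor near]]] := rat_affine_minorant Cx0 delta0.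
have gap_cont : {within C, continuous (fun y => rat_affine aq bq y - (phi y - delta))}.
  move=> y; apply: cvgB; first exact: (continuous_subspaceT (@rat_affine_continuous R n aq bq)).
  by apply: cvgB; [exact: phi_cont | exact: cvg_cst].
have [|r r_gt0 rP] := continuous_within_pos_ball gap_cont Cx0; first by rewrite subr_gt0.
by exists aq, bq, r => //; split => // y Cy x0y; rewrite -subr_gt0; exact: rP.
Qed.

Lemma max_rat_affine_approx delta : 0 < delta ->
  exists K (aq : 'I_K -> 'rV[rat]_n) (bq : 'I_K -> rat), [/\ (0 < K)%N,
    forall k y, C y -> rat_affine (aq k) (bq k) y <= phi y + delta &
    forall y, C y -> exists k, phi y - delta < rat_affine (aq k) (bq k) y].
Proof.
move=> delta0; have [[x1 Cx1]|C0] := pselect (exists x, C x); last first.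
  by exists 1%N, (fun=> 0), (fun=> 0); split=> // [k|] y Cy; exfalso; apply: C0; exists y.
have local x0 : exists t : 'rV[rat]_n * rat * R, C x0 -> [/\ 0 < t.2,
    forall y, C y -> rat_affine t.1.1 t.1.2 y <= phi y + delta &
    forall y, C y -> ball x0 t.2 y -> phi y - delta < rat_affine t.1.1 t.1.2 y].
  have [Cx0|nCx0] := pselect (C x0); last by exists (0, 0, 1) => /nCx0.
  have [aq [bq [r r_gt0 [minor near]]]] := rat_affine_minorant_near Cx0 delta0.
  by exists (aq, bq, r).
have [g gP] := choice local.
have C_cover : C `<=` cover C (fun x0 => ball x0 (g x0).2).
  by move=> x Cx; exists x => //; apply: ballxx; have [] := gP x Cx.
move: (C_compact); rewrite compact_cover.
move=> /(_ _ _ _ (fun x0 _ => ball_open x0 (g x0).2) C_cover) [D DC Dcover].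
set s := finmap.enum_fset D.
have s_C (k : 'I_(size s)) : C (nth 0 s k) by apply/set_mem/DC/mem_nth.
exists (size s), (fun k => (g (nth 0 s k)).1.1), (fun k => (g (nth 0 s k)).1.2); split.
- have [x0 Dx0 _] := Dcover x1 Cx1.
  by apply: (leq_ltn_trans (leq0n (index x0 s))); rewrite index_mem.
- by move=> k y Cy; have [_ minor _] := gP _ (s_C k); exact: minor.
move=> y Cy; have [x0 Dx0 x0y] := Dcover y Cy.
have x0_idx : (index x0 s < size s)%N by rewrite index_mem.
exists (Ordinal x0_idx); rewrite /= nth_index //.
by have [_ _ near] := gP x0 (set_mem (DC _ Dx0)); exact: near.
Qed.

End ConvexApproximation.

Section LogSumExp.
Variables (R : realType) (K : nat) (T : R) (L : 'I_K -> R).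
Hypothesis T_gt0 : 0 < T.

Lemma expR_le_sum_expR j : expR (L j / T) <= \sum_(k < K) expR (L k / T).
Proof. by rewrite (bigD1 j) //= lerDl sumr_ge0 // => k _; exact: ltW (expR_gt0 _). Qed.

Lemma lse_ge_term j : L j <= T * ln (\sum_(k < K) expR (L k / T)).
Proof.
have sum_gt0 := lt_le_trans (expR_gt0 _) (expR_le_sum_expR j).
by rewrite -ler_pdivrMl // -ler_expR lnK ?posrE // mulrC expR_le_sum_expR.
Qed.

Lemma lse_le_bound U : (0 < K)%N -> (forall k, L k <= U) ->
  T * ln (\sum_(k < K) expR (L k / T)) <= U + T * ln K%:R.
Proof.
move=> K_gt0 LU.
have sum_gt0 := lt_le_trans (expR_gt0 _) (expR_le_sum_expR (Ordinal K_gt0)).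
have sum_le : \sum_(k < K) expR (L k / T) <= K%:R * expR (U / T).
  have -> : K%:R * expR (U / T) = \sum_(k < K) expR (U / T).
    by rewrite sumr_const card_ord mulr_natl.
  by apply: ler_sum => k _; rewrite ler_expR ler_pM2r ?invr_gt0 ?LU.
have : ln (\sum_(k < K) expR (L k / T)) <= ln K%:R + U / T.
  rewrite -[U / T]expRK -lnM ?posrE ?ltr0n ?expR_gt0 //.
  by rewrite ler_ln ?posrE ?mulr_gt0 ?ltr0n ?expR_gt0.
by rewrite -ler_pdivlMl // mulrDr mulKf ?gt_eqF //; lra.
Qed.

End LogSumExp.

Lemma LSE_ratE (R : realType) n K (T : rat) (alpha : 'I_K -> 'rV[rat]_n)
    (beta : 'I_K -> rat) (x : 'rV[R]_n) :
  LSE_rat T alpha beta x =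
  ratr T * ln (\sum_(k < K) expR (rat_affine (alpha k) (beta k) x / ratr T)).
Proof. by rewrite /LSE_rat /LSE; congr (_ * ln _); apply: eq_bigr => k _; rewrite mulrDl. Qed.

Lemma convex_LSE_inv_nat_approx (R : realType) n (C : set 'rV[R]_n) (phi : 'rV[R]_n -> R) :
  compact C -> convex_set_Rn C -> {within C, continuous phi} -> convex_on C phi ->
  forall eps : R, 0 < eps ->
  exists (p K : nat) (alpha : 'I_K -> 'rV[rat]_n) (beta : 'I_K -> rat),
    [/\ (0 < p)%N, (0 < K)%N &
        forall x, C x -> `|LSE_rat (p%:R)^-1 alpha beta x - phi x| <= eps].
Proof.
move=> C_compact C_convex phi_cont phi_convex eps eps_gt0.
have eps2_gt0 : 0 < eps / 2 by rewrite divr_gt0.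
have [K [aq [bq [K_gt0 above below]]]] :=
  max_rat_affine_approx C_compact C_convex phi_cont phi_convex eps2_gt0.
(* with T = 1/p and p > 2 ln K / eps, the overshoot T ln K is at most eps / 2 *)
set p := (Num.truncn (2 * ln K%:R / eps)).+1.
exists p, K, aq, bq; split => // x Cx.
have p_gt0 : 0 < p%:R :> R by rewrite ltr0n.
have T_gt0 : 0 < p%:R^-1 :> R by rewrite invr_gt0.
have T_lnK : p%:R^-1 * ln K%:R <= eps / 2 :> R.
  have lnK_ge0 : 0 <= ln K%:R :> R by rewrite ln_ge0 // ler1n.
  have : 2 * ln K%:R / eps < p%:R :> R by exact: truncnS_gt.
  by rewrite ltr_pdivrMr // ler_pdivrMl //; nra.
rewrite LSE_ratE fmorphV rmorph_nat.
have [k near] := below x Cx.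
have lo := lse_ge_term (fun k => rat_affine (aq k) (bq k) x) T_gt0 k.
have hi := lse_le_bound T_gt0 K_gt0 (fun k => above k x Cx).
by rewrite ler_norml; apply/andP; split; lra.
Qed.

Theorem corollary1 (R : realType) (n : nat) (C : set 'rV[R]_n)
  (phi : 'rV[R]_n -> R) :
  compact C -> convex_set_Rn C ->
  {within C, continuous phi} -> convex_on C phi ->
  forall eps : R, 0 < eps ->
  (* main claim: rational T > 0 and f_T in LSE_T with rational parameters *)
  (exists (T : rat) (K : nat) (alpha : 'I_K -> 'rV[rat]_n) (beta : 'I_K -> rat),
      0 < T /\ (0 < K)%N /\
      forall x, C x -> `| @LSE_rat R n K T alpha beta x - phi x | <= eps) /\
  (* moreover: T may be taken as 1/p with p a positive integer *)
  (exists (p : nat) (K : nat) (alpha : 'I_K -> 'rV[rat]_n) (beta : 'I_K -> rat),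
      (0 < p)%N /\ (0 < K)%N /\
      forall x, C x ->
        `| @LSE_rat R n K (p%:R)^-1 alpha beta x - phi x | <= eps).
Proof.
move=> C_compact C_convex phi_cont phi_convex eps eps_gt0.
have [p [K [alpha [beta [p_gt0 K_gt0 approx]]]]] :=
  convex_LSE_inv_nat_approx C_compact C_convex phi_cont phi_convex eps_gt0.
split; last by exists p, K, alpha, beta.
by exists p%:R^-1, K, alpha, beta; rewrite invr_gt0 ltr0n.
Qed.
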